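(* Every bridged graph satisfies the triangle diamond condition $(TDC)$; consequently every bridged graph is a diamond-weakly modular graph.
   Context: All graphs are finite, simple and connected; $d$ denotes the shortest-path distance. A graph is bridged if it has no isometric cycle of length greater than $3$. A diamond is $K_4$ minus one edge. Triangle diamond condition $(TDC)$: for any three vertices $u,v,w$ with $1=d(v,w)<d(u,v)=d(u,w)$, there exists a common neighbor $z$ of $v$ and $w$ with $d(u,z)=d(u,v)-1$ such that $z$ is adjacent to every vertex $x$ with $d(x,v)=1$, $d(u,x)=d(u,v)-1$ and to every vertex $y$ with $d(y,w)=1$, $d(u,y)=d(u,w)-1$ (so that $v,w,z$ form diamonds with such $x$ and $y$). Quadrangle condition $(QC)$: for any four vertices $u,v,w,y$ with $d(v,y)=d(w,y)=1$ and $2=d(v,w)\le d(u,v)=d(u,w)=d(u,y)-1$, there exists a common neighbor $z$ of $v$ and $w$ with $d(u,z)=d(u,v)-1$. A graph is diamond-weakly modular if its distance function satisfies $(QC)$ and $(TDC)$. *)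

From mathcomp Require Import all_boot.
Set Implicit Arguments. Unset Strict Implicit. Unset Printing Implicit Defensive.

Section Graphs.
Variable T : finType.
Variable e : rel T.

Definition simple_connected_graph : Prop :=
  [/\ symmetric e, irreflexive e & forall x y : T, connect e x y].

Fixpoint walkn (n : nat) (x y : T) : bool :=
  if n is n'.+1 then [exists z, e x z && walkn n' z y] else x == y.

(* In a connected graph this is the usual graph distance,
   since a shortest walk has fewer than #|T| edges. *)
Definition dist (x y : T) : nat := find (fun n => walkn n x y) (iota 0 #|T|).

Definition cyc_dist (k i j : nat) : nat :=
  let a := maxn i j - minn i j in minn a (k - a).

(* s = [:: v_0; ...; v_{k-1}] is a cycle of G: k >= 3 distinct vertices,
   consecutive ones adjacent and v_{k-1} adjacent to v_0 (MathComp's cycle). *)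
Definition is_cycle (s : seq T) : Prop :=
  [/\ 3 <= size s, uniq s & cycle e s].

(* The cycle is isometric: distances in G between its vertices equal the
   distances along the cycle.  (x0 is only the default of nth; indices are in
   range, so it is irrelevant.) *)
Definition isometric_cycle (s : seq T) : Prop :=
  is_cycle s /\
  forall (x0 : T) i j, i < size s -> j < size s ->
    dist (nth x0 s i) (nth x0 s j) = cyc_dist (size s) i j.

Definition bridged : Prop :=
  forall s : seq T, isometric_cycle s -> ~ (3 < size s).

Definition TDC : Prop :=
  forall u v w : T, 1 = dist v w -> dist v w < dist u v -> dist u v = dist u w ->
    exists z : T,
      [/\ e v z, e w z, dist u z = dist u v - 1,
          (forall x, dist x v = 1 -> dist u x = dist u v - 1 -> x != z -> e z x) &
          (forall y, dist y w = 1 -> dist u y = dist u w - 1 -> y != z -> e z y)].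

Definition QC : Prop :=
  forall u v w y : T, dist v y = 1 -> dist w y = 1 ->
    2 = dist v w -> dist v w <= dist u v -> dist u v = dist u w ->
    dist u w = dist u y - 1 ->
    exists z : T, [/\ e v z, e w z & dist u z = dist u v - 1].

Definition diamond_weakly_modular : Prop := QC /\ TDC.

End Graphs.

(* Fix a base point c and call d c x the level of x.  By induction on L, in a
   bridged graph
   (a) the neighbours at level L - 1 of a vertex at level L form a clique, and
   (b) two adjacent vertices at level L have a common neighbour at level L - 1.
   TDC follows from (a) and (b), and the hypotheses of QC contradict (a).
   A failure of (a) (non-adjacent y, z below a common neighbour x) or of (b)
   (an edge v w with no common neighbour below) yields, with shortest paths
   p, q from y, z (resp. v, w) down to c, the cycle
     x, p 0, ..., p k = c = q k, ..., q 0  resp.  p 0, ..., p n = c = q n, ..., q 0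
   of length 2k + 2 resp. 2n + 1 > 3.  This cycle is isometric: d (p i) (q l)
   equals the distance along it, by induction on i + l.  Given a shortcut from
   p i to q (l + 1), (a) and (b) at lower levels around p i (and around c)
   replace q l by a vertex closer to p i, giving a shortcut with a smaller
   index sum or, at the first step, an isometric 5-cycle. *)

From mathcomp Require Import all_boot.
From mathcomp Require Import zify.
Set Implicit Arguments. Unset Strict Implicit. Unset Printing Implicit Defensive.

Section BridgedGraph.
Variables (T : finType) (e : rel T).
Hypothesis sym_e : symmetric e.
Hypothesis irr_e : irreflexive e.
Hypothesis conn_e : forall x y : T, connect e x y.

Local Notation d := (dist e).
Local Notation walkn := (walkn e).

Lemma walknD m n x z : walkn (m + n) x z <-> exists2 y, walkn m x y & walkn n y z.
Proof.
elim: m x => [|m IH] x /=.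
  by split=> [|[y /eqP ->]]; first exists x.
split=> [/existsP [y /andP [exy /IH [y' Hxy' Hy'z]]]|[y /existsP [y' /andP [exy' Hy'y]] Hyz]].
  by exists y' => //; apply/existsP; exists y; rewrite exy.
by apply/existsP; exists y'; rewrite exy' /=; apply/IH; exists y.
Qed.

Lemma walknP n x y :
  reflect (exists p, [/\ size p = n, path e x p & last x p = y]) (walkn n x y).
Proof.
apply: (iffP idP).
  elim: n x => [x /eqP ->|n IH x /existsP [z /andP [exz /IH [p [Hs Hp Hl]]]]].
    by exists [::].
  by exists (z :: p); rewrite /= exz Hs Hp Hl.
case=> p [<- Hp <-] {n y}; elim: p x Hp => [|z p IH] x /=; first by rewrite eqxx.
by case/andP=> exz Hp; apply/existsP; exists z; rewrite exz IH.
Qed.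

Lemma walkn_short x y : exists2 n, n < #|T| & walkn n x y.
Proof.
have /connectP [p Hp Hl] := conn_e x y.
case: (shortenP Hp) Hl => p' Hp' Hu _ ->.
exists (size p'); last by apply/walknP; exists p'.
by rewrite -ltnS -[(size p').+1]/(size (x :: p')) -(card_uniqP Hu) ltnS max_card.
Qed.

Lemma has_walkn x y : has (fun n => walkn n x y) (iota 0 #|T|).
Proof. by have [n Hn Hw] := walkn_short x y; apply/hasP; exists n; rewrite ?mem_iota. Qed.

Lemma dist_lt x y : d x y < #|T|.
Proof. by have := has_walkn x y; rewrite has_find size_iota. Qed.

Lemma dist_walkn x y : walkn (d x y) x y.
Proof. by have := nth_find 0 (has_walkn x y); rewrite nth_iota ?dist_lt. Qed.

Lemma dist_min n x y : walkn n x y -> d x y <= n.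
Proof.
move=> Hw; case: (ltnP n #|T|) => Hn; last exact: leq_trans (ltnW (dist_lt x y)) Hn.
by rewrite leqNgt; apply/negP => /(before_find 0); rewrite nth_iota // add0n Hw.
Qed.

Lemma distxx x : d x x = 0.
Proof. by apply/eqP; rewrite -leqn0; apply: dist_min; rewrite /= eqxx. Qed.

Lemma dist_eq0 x y : d x y = 0 -> x = y.
Proof. by move=> H; have := dist_walkn x y; rewrite H => /eqP. Qed.

Lemma walkn_sym n x y : walkn n x y -> walkn n y x.
Proof.
elim: n x y => [x y /eqP -> //|n IH x y /existsP [z /andP [exz /IH Hw]]].
  by rewrite /= eqxx.
rewrite -addn1; apply/walknD; exists z => //=.
by apply/existsP; exists x; rewrite sym_e exz eqxx.
Qed.

Lemma distC x y : d x y = d y x.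
Proof. by apply/eqP; rewrite eqn_leq !dist_min // walkn_sym // dist_walkn. Qed.

Lemma dist_triangle x y z : d x z <= d x y + d y z.
Proof. by apply: dist_min; apply/walknD; exists y; apply: dist_walkn. Qed.

Lemma edge_dist1 x y : e x y -> d x y = 1.
Proof.
move=> exy; apply/eqP; rewrite eqn_leq lt0n.
rewrite dist_min /=; last by apply/existsP; exists y; rewrite exy eqxx.
by apply/eqP => /dist_eq0 Exy; rewrite Exy irr_e in exy.
Qed.

Lemma dist1_edge x y : d x y = 1 -> e x y.
Proof.
move=> H; have := dist_walkn x y; rewrite H /=.
by case/existsP=> z /andP [exz /eqP <-].
Qed.

Lemma dist_succ n x y : d x y = n.+1 -> exists2 z, e x z & d z y = n.
Proof.
move=> H; have := dist_walkn x y; rewrite H /= => /existsP [z /andP [exz Hw]].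
exists z => //; apply/eqP; rewrite eqn_leq dist_min //=.
by have := dist_triangle x z y; rewrite H edge_dist1.
Qed.

Lemma dist_edge_le c a b : e a b -> d c a <= d c b + 1.
Proof. by move=> eab; have := dist_triangle c b a; rewrite (distC b a) (edge_dist1 eab). Qed.

Lemma cyc_distC N a b : cyc_dist N a b = cyc_dist N b a.
Proof. by rewrite /cyc_dist /= maxnC (minnC a b). Qed.

Hypothesis bridged_e : bridged e.

Lemma no_isometric_cycle N (g : nat -> T) : 3 < N ->
  ~ (forall a b, a < N -> b < N -> d (g a) (g b) = cyc_dist N a b).
Proof.
move=> N3 Hg; suff iso : isometric_cycle e (mkseq g N) by apply: (bridged_e iso); rewrite size_mkseq.
split; last by move=> x0 i j; rewrite size_mkseq => Hi Hj; rewrite !nth_mkseq ?Hg.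
split; rewrite ?size_mkseq 1?ltnW //.
  rewrite map_inj_in_uniq ?iota_uniq // => a b; rewrite !mem_iota !add0n => Ha Hb Eg.
  by have := Hg a b Ha Hb; rewrite Eg distxx /cyc_dist; lia.
rewrite (cycle_path (g 0)); apply/(pathP (g 0)) => i; rewrite size_mkseq => Hi.
apply: dist1_edge; case: i Hi => [|i] Hi /=.
  by rewrite -(nth_last (g 0)) size_mkseq !nth_mkseq ?Hg /cyc_dist //=; lia.
by rewrite !nth_mkseq ?Hg /cyc_dist; lia.
Qed.

Lemma no_isometric_C5 v0 v1 v2 v3 v4 :
  e v0 v1 -> e v1 v2 -> e v2 v3 -> e v3 v4 -> e v4 v0 ->
  d v0 v2 = 2 -> d v0 v3 = 2 -> d v1 v3 = 2 -> d v1 v4 = 2 -> d v2 v4 = 2 -> False.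
Proof.
move=> /edge_dist1 d01 /edge_dist1 d12 /edge_dist1 d23 /edge_dist1 d34 /edge_dist1 d40.
move=> d02 d03 d13 d14 d24.
apply: (@no_isometric_cycle 5 (nth v0 [:: v0; v1; v2; v3; v4])) => // a b.
by case: a => [|[|[|[|[|a]]]]] //; case: b => [|[|[|[|[|b]]]]] // _ _;
  rewrite /cyc_dist /= ?distxx // distC.
Qed.

Definition geodesic c n y (p : nat -> T) :=
  [/\ p 0 = y, forall i, i <= n -> d c (p i) = n - i & forall i, i < n -> e (p i) (p i.+1)].

Section Geodesic.
Variables (c y : T) (n : nat) (p : nat -> T).
Hypothesis Gp : geodesic c n y p.

Lemma geodesic0 : p 0 = y.
Proof. by case: Gp. Qed.

Lemma geodesic_level i : i <= n -> d c (p i) = n - i.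
Proof. by case: Gp => _ + _; apply. Qed.

Lemma geodesic_edge i : i < n -> e (p i) (p i.+1).
Proof. by case: Gp => _ _; apply. Qed.

Lemma geodesic_dist i j : i <= j -> j <= n -> d (p i) (p j) = j - i.
Proof.
move=> ij jn; apply/eqP; rewrite eqn_leq; apply/andP; split.
  have walk t : i + t <= n -> d (p i) (p (i + t)) <= t.
    elim: t => [|t IH]; rewrite ?addn0 ?distxx // addnS => tn.
    apply: leq_trans (dist_triangle _ (p (i + t)) _) _.
    by rewrite (edge_dist1 (geodesic_edge tn)) addn1 ltnS IH // ltnW.
  by have := walk (j - i); rewrite subnKC //; apply.
have := dist_triangle c (p j) (p i).
by rewrite !geodesic_level ?(leq_trans ij) // distC; lia.
Qed.

Lemma geodesic_dist0 i : i <= n -> d y (p i) = i.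
Proof. by move=> i_n; rewrite -geodesic0 geodesic_dist ?subn0. Qed.

End Geodesic.

Lemma geodesic_cons c n x y p : d c x = n.+1 -> e x y -> geodesic c n y p ->
  geodesic c n.+1 x (fun i => if i is i'.+1 then p i' else x).
Proof.
move=> dx exy [p0 lvl edg]; split=> // [[|i] Hi|[|i] Hi] /=.
- by rewrite dx.
- by rewrite lvl.
- by rewrite p0.
- exact: edg.
Qed.

Lemma geodesic_exists c n y : d c y = n -> exists p, geodesic c n y p.
Proof.
elim: n y => [|n IH] y Hy; first by exists (fun=> y); split=> // i _ /=; rewrite Hy.
have [z eyz dzc] := dist_succ (etrans (distC y c) Hy).
have [p Gp] := IH z (etrans (distC c z) dzc).
by exists (fun i => if i is i'.+1 then p i' else y); exact: geodesic_cons Hy eyz Gp.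
Qed.

Lemma geodesic_set c n y p j m : geodesic c n y p -> j < n -> d c m = n - j ->
    (0 < j -> e (p j.-1) m) -> e m (p j.+1) ->
  geodesic c n (if j == 0 then m else y) (fun t => if t == j then m else p t).
Proof.
move=> [p0 lvl edg] jn dm epm emp; split=> [|t tn|t tn].
- by case: j {jn dm epm emp} => [|j] //=.
- by case: eqP => [->|_]; rewrite ?lvl.
case: (t =P j) => [->|tj]; first by rewrite ifN_eq // gtn_eqF.
case: eqP => [tj1|_]; last exact: edg.
by move: epm; rewrite -tj1; apply.
Qed.

(* The cycle p 0, ..., p n = q n, ..., q (1 - t): when t = 0 both paths start at p 0 = q 0. *)
Lemma geodesic_pair_cycle c n t y z p q : 1 < n -> t <= 1 ->
  geodesic c n y p -> geodesic c n z q ->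
  ~ (forall i l, i <= n -> l <= n -> d (p i) (q l) = minn (i + l + t) (2 * n - i - l)).
Proof.
move=> n1 t1 Gp Gq Hpq.
apply: (@no_isometric_cycle (2 * n + t) (fun j => if j <= n then p j else q (2 * n - j))).
  by lia.
move=> a b Ha Hb; wlog ab : a b Ha Hb / a <= b.
  by move=> W; case: (leqP a b) => [|/ltnW] ab; [|rewrite distC cyc_distC]; apply: W.
case: (leqP a n) => an; case: (leqP b n) => bn.
- by rewrite (geodesic_dist Gp) // /cyc_dist; lia.
- by rewrite Hpq /cyc_dist; lia.
- by lia.
- by rewrite distC (geodesic_dist Gq) /cyc_dist; lia.
Qed.

Definition lower_clique c L := forall x y z, d c x = L -> e x y -> e x z ->
  d c y = L - 1 -> d c z = L - 1 -> y != z -> e y z.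

Definition triangle_condition c L := forall v w, d c v = L -> d c w = L -> e v w ->
  exists m, [/\ e v m, e w m & d c m = L - 1].

Lemma lower_common_neighbor P s a b b' :
    lower_clique P s.+1 -> (d P b' = s.+1 -> triangle_condition P s.+1) ->
    d P a = s -> d P b = s.+1 -> d P b' <= s.+1 -> e a b -> e b b' -> a != b' -> ~~ e a b' ->
  d P b' = s.+1 /\ exists m, [/\ e b m, e b' m, e a m & d P m = s].
Proof.
move=> clq tc dPa dPb dPb' eab ebb' nab' neab'.
have eba : e b a by rewrite sym_e.
have [dPb's|dPb's] : d P b' = s \/ d P b' = s.+1.
  by have := dist_edge_le P ebb'; lia.
  by case/negP: neab'; apply: (clq b); rewrite ?subn1.
have [m [ebm eb'm dPm]] := tc dPb's b b' dPb dPb's ebb'.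
rewrite subn1 /= in dPm; split=> //; exists m; split=> //.
apply: (clq b); rewrite ?subn1 //.
by apply: contraNneq neab' => ->; rewrite sym_e.
Qed.

Lemma dist_eq2 a b m : e a m -> e m b -> a != b -> ~~ e a b -> d a b = 2.
Proof.
move=> eam emb nab neab.
have := dist_triangle a m b; rewrite (edge_dist1 eam) (edge_dist1 emb).
have : d a b != 0 by apply: contra_neq nab => /dist_eq0.
have : d a b != 1 by apply: contraNneq neab => /dist1_edge.
lia.
Qed.

Section CliqueDefect.
Variables (c x : T) (k : nat).
Hypothesis dcx : d c x = k.+1.
Hypothesis below : forall c' L, L <= k -> lower_clique c' L /\ triangle_condition c' L.

Definition clique_defect y z := [/\ d c y = k, d c z = k, e x y, e x z & d y z = 2].

Lemma clique_defectC y z : clique_defect y z -> clique_defect z y.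
Proof. by case=> *; split; rewrite // distC. Qed.

Lemma dist_top_geodesic y p i : e x y -> geodesic c k y p -> i <= k -> d x (p i) = i.+1.
Proof. by move=> exy Gp ik; exact: (geodesic_dist0 (geodesic_cons dcx exy Gp) (i := i.+1)). Qed.

Lemma clique_defect_ub y z p q i l : clique_defect y z ->
    geodesic c k y p -> geodesic c k z q -> i <= k -> l <= k ->
  d (p i) (q l) <= minn (i + l + 2) (2 * k - i - l).
Proof.
case=> _ _ exy exz _ Gp Gq ik lk.
have := dist_triangle (p i) x (q l); have := dist_triangle (p i) c (q l).
rewrite (distC (p i) x) (dist_top_geodesic exy Gp ik) (dist_top_geodesic exz Gq lk).
by rewrite (distC (p i) c) (geodesic_level Gp ik) (geodesic_level Gq lk); lia.
Qed.

Definition clique_defect_lb s := forall y z p q i l, clique_defect y z ->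
  geodesic c k y p -> geodesic c k z q -> i + l = s -> i <= k -> l <= k ->
  minn (s + 2) (2 * k - s) <= d (p i) (q l).

Section Step.
Variables (s : nat) (y z : T) (p q : nat -> T) (i l : nat).
Hypothesis IH : forall s', s' <= s -> clique_defect_lb s'.
Hypotheses (Hc : clique_defect y z) (Gp : geodesic c k y p) (Gq : geodesic c k z q).
Hypotheses (Hs : i + l = s) (ik : i <= k) (lk : l < k).
Hypothesis viol : d (p i) (q l.+1) < minn (s + 3) (2 * k - s.+1).

Lemma clique_defect_step :
  [/\ s.+2 <= k, d (p i) (q l.+1) = s.+2 &
    exists m, [/\ e (q l) m, e (q l.+1) m, e (if l is l'.+1 then q l' else x) m,
                  d c m = k - l & d (p i) m = s.+1]].
Proof.
case: (Hc) => _ _ exy exz _.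
have lb := IH (leqnn s) Hc Gp Gq Hs ik (ltnW lk).
have ub := clique_defect_ub Hc Gp Gq ik (ltnW lk).
have := dist_triangle (p i) (q l.+1) (q l).
rewrite (distC (q l.+1)) (edge_dist1 (geodesic_edge Gq lk)) => tri.
have sk : s.+2 <= k by lia.
have dPb : d (p i) (q l) = s.+2 by lia.
set a := if l is l'.+1 then q l' else x.
have dPa : d (p i) a = s.+1.
  rewrite /a; case: (l) Hs lk => [|l'] Hs' lk'.
    by rewrite distC (dist_top_geodesic exy Gp ik) -Hs' addn0.
  have := IH (_ : i + l' <= s) Hc Gp Gq erefl ik (ltnW (ltnW lk')).
  by have := clique_defect_ub Hc Gp Gq ik (ltnW (ltnW lk')); lia.
have dca : d c a = (k - l).+1.
  by rewrite /a; case: (l) lk => [|l'] lk' /=; rewrite ?dcx ?(geodesic_level Gq); lia.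
have eab : e a (q l).
  rewrite /a; case: (l) lk => [|l'] lk'; first by rewrite (geodesic0 Gq).
  by apply: (geodesic_edge Gq); lia.
have dcb' := geodesic_level Gq lk.
have nab' : a != q l.+1 by apply/eqP => E; move: dca; rewrite E dcb'; lia.
have neab' : ~~ e a (q l.+1) by apply/negP => /(dist_edge_le c); rewrite dca dcb'; lia.
have [clq tc] := below (p i) sk.
have dPb'_le : d (p i) (q l.+1) <= s.+2 by lia.
have [dPb' [m [ebm eb'm eam dPm]]] :=
  lower_common_neighbor clq (fun _ => tc) dPa dPb dPb'_le eab (geodesic_edge Gq lk) nab' neab'.
split=> //; exists m; split=> //.
have emb' : e m (q l.+1) by rewrite sym_e.
by have := dist_edge_le c eam; have := dist_edge_le c emb'; rewrite dca dcb'; lia.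
Qed.

End Step.

Lemma clique_defect_tail s y z p q i l : (forall s', s' <= s -> clique_defect_lb s') ->
    clique_defect y z -> geodesic c k y p -> geodesic c k z q ->
    i + l.+1 = s -> i <= k -> l.+1 < k ->
  minn (s + 3) (2 * k - s.+1) <= d (p i) (q l.+2).
Proof.
move=> IH Hc Gp Gq Hs ik lk; rewrite leqNgt; apply/negP => viol.
have [sk _ [m [_ eqm' eam dcm dPm]]] := clique_defect_step IH Hc Gp Gq Hs ik lk viol.
have emq : e m (q l.+2) by rewrite sym_e.
have Gq' := geodesic_set Gq lk dcm (fun _ => eam) emq.
by have := IH s (leqnn s) y z p _ i l.+1 Hc Gp Gq' Hs ik (ltnW lk); rewrite /= eqxx dPm; lia.
Qed.

Lemma clique_defect_pentagon y z m w : clique_defect y z -> 1 < k ->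
    e y m -> e z m -> e m w -> e z w -> d c m = k -> d c w = k - 1 -> d y w = 2 -> False.
Proof.
move=> [dcy _ exy exz dyz] k2 eym ezm emw ezw dcm dcw dyw.
have [clq tc] := below c (leqnn k).
have [a [eya ema dca]] := tc y m dcy dcm eym.
have eaw : e a w.
  by apply: (clq m) => //; apply/eqP => E; move: dyw; rewrite -E edge_dist1.
have dxa : d x a = 2.
  have := dist_triangle x y a; have := dist_triangle c a x.
  by rewrite dcx dca (distC a x) (edge_dist1 exy) (edge_dist1 eya); lia.
have dxw : d x w = 2.
  have := dist_triangle x z w; have := dist_triangle c w x.
  by rewrite dcx dcw (distC w x) (edge_dist1 exz) (edge_dist1 ezw); lia.
have neaz : ~~ e a z.
  apply/negP => eaz; have [clqa _] := below a k2.
  have nyz : y != z by apply/eqP => E; move: dyz; rewrite E distxx.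
  have := clqa x y z; rewrite (distC a x) dxa (distC a y) (edge_dist1 eya) (edge_dist1 eaz).
  by move=> /(_ erefl exy exz erefl erefl nyz) /edge_dist1; rewrite dyz.
have naz : a != z by apply/eqP => E; move: dyz; rewrite -E (edge_dist1 eya).
have ewz : e w z by rewrite sym_e.
have ezx : e z x by rewrite sym_e.
exact: (no_isometric_C5 exy eya eaw ewz ezx dxa dxw dyw dyz (dist_eq2 eaw ewz naz neaz)).
Qed.

Lemma clique_defect_head y z p q i : (forall s', s' <= i -> clique_defect_lb s') ->
    clique_defect y z -> geodesic c k y p -> geodesic c k z q -> i <= k -> 0 < k ->
  minn (i + 3) (2 * k - i.+1) <= d (p i) (q 1).
Proof.
move=> IH Hc Gp Gq ik k0; rewrite leqNgt; apply/negP => viol.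
have [sk dPq1 [m [ezm eqm exm dcm dPm]]] := clique_defect_step IH Hc Gp Gq (addn0 i) ik k0 viol.
rewrite (geodesic0 Gq) subn0 in ezm dcm.
have emq : e m (q 1) by rewrite sym_e.
have ezq : e z (q 1) by rewrite -(geodesic0 Gq) (geodesic_edge Gq k0).
case: i ik IH {viol} sk dPq1 dPm => [|i] ik IH sk dPq1 dPm.
  rewrite (geodesic0 Gp) in dPq1 dPm.
  exact: (clique_defect_pentagon Hc sk (dist1_edge dPm) ezm emq ezq dcm (geodesic_level Gq k0) dPq1).
case: (Hc) => dcy _ exy _ dyz.
have nym : y != m by apply/eqP => E; move: dyz; rewrite E distC (edge_dist1 ezm).
have neym : ~~ e y m.
  apply/negP => eym; have := IH 1 _ y z p q 0 1 Hc Gp Gq erefl (leq0n k) k0.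
  by have := dist_triangle y m (q 1); rewrite (geodesic0 Gp) (edge_dist1 eym) (edge_dist1 emq); lia.
have eyx : e y x by rewrite sym_e.
have Gq' : geodesic c k m (fun t => if t == 0 then m else q t).
  by apply: (geodesic_set Gq k0); rewrite ?subn0.
have Hc' : clique_defect y m by split; rewrite ?(dist_eq2 eyx exm).
by have := IH i.+1 (leqnn _) y m p _ i.+1 0 Hc' Gp Gq' (addn0 _) ik (leq0n k); rewrite /= dPm; lia.
Qed.

Lemma clique_defect_shift s y z p q i l : (forall s', s' <= s -> clique_defect_lb s') ->
    clique_defect y z -> geodesic c k y p -> geodesic c k z q ->
    i + l = s -> i <= k -> l < k ->
  minn (s + 3) (2 * k - s.+1) <= d (p i) (q l.+1).
Proof.
move=> IH Hc Gp Gq Hs ik lk; case: l Hs lk => [|l] Hs lk.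
  by move: IH; rewrite -Hs addn0 => IH; apply: clique_defect_head IH Hc Gp Gq ik lk.
exact: clique_defect_tail IH Hc Gp Gq Hs ik lk.
Qed.

Lemma clique_defect_lb_all s : clique_defect_lb s.
Proof.
elim/ltn_ind: s => s IH y z p q i l Hc Gp Gq Hs ik lk.
case: l Hs lk => [|l] Hs lk; last first.
  have IH' s' : s' <= i + l -> clique_defect_lb s' by move=> le_s'; apply: IH; lia.
  by apply: leq_trans (clique_defect_shift IH' Hc Gp Gq erefl ik lk); lia.
case: i Hs ik => [|i] Hs ik.
  by case: Hc => _ _ _ _ dyz; rewrite -Hs (geodesic0 Gp) (geodesic0 Gq) dyz geq_minl.
have IH' s' : s' <= i -> clique_defect_lb s' by move=> le_s'; apply: IH; lia.
rewrite distC; apply: leq_trans (clique_defect_shift IH' (clique_defectC Hc) Gq Gp (add0n i) (leq0n k) ik).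
by lia.
Qed.

Lemma clique_defect_dist y z p q i l : clique_defect y z ->
    geodesic c k y p -> geodesic c k z q -> i <= k -> l <= k ->
  d (p i) (q l) = minn (i + l + 2) (2 * k - i - l).
Proof.
move=> Hc Gp Gq ik lk; apply/eqP; rewrite eqn_leq (clique_defect_ub Hc Gp Gq ik lk) /=.
by rewrite -subnDA; apply: (clique_defect_lb_all Hc Gp Gq erefl ik lk).
Qed.

Lemma clique_defect_false y z : ~ clique_defect y z.
Proof.
move=> Hc; case: (Hc) => dcy dcz exy exz dyz.
have k0 : 0 < k.
  by rewrite lt0n; apply: contra_eq_neq dyz => k0; rewrite -(dist_eq0 (etrans dcy k0)) -(dist_eq0 (etrans dcz k0)) distxx.
have [p Gp] := geodesic_exists dcy; have [q Gq] := geodesic_exists dcz.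
apply: (geodesic_pair_cycle (t := 0) _ _ (geodesic_cons dcx exy Gp) (geodesic_cons dcx exz Gq)) => //.
case=> [|i] [|l] /= ik lk.
- by rewrite distxx.
- by rewrite (dist_top_geodesic exz Gq lk); lia.
- by rewrite distC (dist_top_geodesic exy Gp ik); lia.
- by rewrite (clique_defect_dist Hc Gp Gq ik lk); lia.
Qed.

End CliqueDefect.

Section TriangleDefect.
Variables (c : T) (n : nat).
Hypothesis tc_below : forall c' L, L < n -> triangle_condition c' L.
Hypothesis clq_upto : forall c' L, L <= n -> lower_clique c' L.

Definition triangle_defect v w :=
  [/\ d c v = n, d c w = n, e v w & forall m, e v m -> e w m -> d c m != n - 1].

Lemma triangle_defectC v w : triangle_defect v w -> triangle_defect w v.
Proof. by case=> dcv dcw evw Hm; split; rewrite 1?sym_e // => m ewm evm; apply: Hm. Qed.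

Lemma triangle_defect_ub v w p q i l : triangle_defect v w ->
    geodesic c n v p -> geodesic c n w q -> i <= n -> l <= n ->
  d (p i) (q l) <= minn (i + l + 1) (2 * n - i - l).
Proof.
case=> _ _ evw _ Gp Gq i_n l_n.
have := dist_triangle (p i) v (q l); have := dist_triangle v w (q l).
have := dist_triangle (p i) c (q l).
rewrite (distC (p i) v) (geodesic_dist0 Gp i_n) (edge_dist1 evw) (geodesic_dist0 Gq l_n).
by rewrite (distC (p i) c) (geodesic_level Gp i_n) (geodesic_level Gq l_n); lia.
Qed.

Definition triangle_defect_lb s := forall v w p q i l, triangle_defect v w ->
  geodesic c n v p -> geodesic c n w q -> i + l = s -> i <= n -> l <= n ->
  minn (s + 1) (2 * n - s) <= d (p i) (q l).

Section Step.
Variables (s : nat) (v w : T) (p q : nat -> T) (i l : nat).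
Hypothesis IH : forall s', s' <= s -> triangle_defect_lb s'.
Hypotheses (Hc : triangle_defect v w) (Gp : geodesic c n v p) (Gq : geodesic c n w q).
Hypotheses (Hs : i + l = s) (i_n : i <= n) (l_n : l < n).
Hypothesis viol : d (p i) (q l.+1) < minn (s + 2) (2 * n - s.+1).

Lemma triangle_defect_step :
  [/\ s.+1 < n, d (p i) (q l.+1) = s.+1 &
    exists m, [/\ e (q l) m, e (q l.+1) m, e (if l is l'.+1 then q l' else v) m,
                  d c m = n - l & d (p i) m = s]].
Proof.
have lb := IH (leqnn s) Hc Gp Gq Hs i_n (ltnW l_n).
have ub := triangle_defect_ub Hc Gp Gq i_n (ltnW l_n).
have := dist_triangle (p i) (q l.+1) (q l).
rewrite (distC (q l.+1)) (edge_dist1 (geodesic_edge Gq l_n)) => tri.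
have sn : s.+1 <= n by lia.
have dPb : d (p i) (q l) = s.+1 by lia.
have dPb'_le : d (p i) (q l.+1) <= s.+1 by lia.
have tc : d (p i) (q l.+1) = s.+1 -> triangle_condition (p i) s.+1.
  by move=> dPb'; apply: tc_below; lia.
case: (Hc) => dcv _ evw nocom.
have dcb' := geodesic_level Gq l_n.
set a := if l is l'.+1 then q l' else v.
have dPa : d (p i) a = s.
  rewrite /a; case: (l) Hs l_n => [|l'] Hs' l_n'.
    by rewrite distC (geodesic_dist0 Gp i_n) -Hs' addn0.
  have := IH (_ : i + l' <= s) Hc Gp Gq erefl i_n (ltnW (ltnW l_n')).
  by have := triangle_defect_ub Hc Gp Gq i_n (ltnW (ltnW l_n')); lia.
have eab : e a (q l).
  rewrite /a; case: (l) l_n => [|l'] l_n'; first by rewrite (geodesic0 Gq).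
  by apply: (geodesic_edge Gq); lia.
have ewq1 : 0 < n -> e w (q 1) by move=> n0; rewrite -(geodesic0 Gq) (geodesic_edge Gq n0).
have [nab' neab'] : a != q l.+1 /\ ~~ e a (q l.+1).
  rewrite /a; case: (l) l_n dcb' => [|l'] l_n' dcb'.
    split; first by apply/eqP => E; move: dcv; rewrite E dcb'; lia.
    by apply/negP => evq; move: (nocom _ evq (ewq1 l_n')); rewrite dcb' eqxx.
  have dca : d c (q l') = n - l' by rewrite (geodesic_level Gq) //; lia.
  split; first by apply/eqP => E; move: dca; rewrite E dcb'; lia.
  by apply/negP => /(dist_edge_le c); rewrite dca dcb'; lia.
have [dPb' [m [ebm eb'm eam dPm]]] :=
  lower_common_neighbor (@clq_upto (p i) _ sn) tc dPa dPb dPb'_le eab (geodesic_edge Gq l_n) nab' neab'.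
split; [by lia | by [] | exists m; split => //].
have emb' : e m (q l.+1) by rewrite sym_e.
have := dist_edge_le c emb'; rewrite dcb' => dcm_le.
rewrite /a in eam; clear dPa eab nab' neab' a.
case: (l) l_n dcm_le ebm eam => [|l'] l_n' dcm_le ebm eam.
  have := dist_edge_le c eam; rewrite (geodesic0 Gq) in ebm.
  by move: (nocom m eam ebm); rewrite dcv; lia.
by have := dist_edge_le c eam; rewrite (geodesic_level Gq); lia.
Qed.

End Step.

Lemma triangle_defect_tail s v w p q i l : (forall s', s' <= s -> triangle_defect_lb s') ->
    triangle_defect v w -> geodesic c n v p -> geodesic c n w q ->
    i + l.+1 = s -> i <= n -> l.+1 < n ->
  minn (s + 2) (2 * n - s.+1) <= d (p i) (q l.+2).
Proof.
move=> IH Hc Gp Gq Hs i_n l_n; rewrite leqNgt; apply/negP => viol.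
have [sn _ [m [_ eqm' eam dcm dPm]]] := triangle_defect_step IH Hc Gp Gq Hs i_n l_n viol.
have emq : e m (q l.+2) by rewrite sym_e.
have Gq' := geodesic_set Gq l_n dcm (fun _ => eam) emq.
by have := IH s (leqnn s) v w p _ i l.+1 Hc Gp Gq' Hs i_n (ltnW l_n); rewrite /= eqxx dPm; lia.
Qed.

Lemma triangle_defect_head v w p q i : (forall s', s' <= i -> triangle_defect_lb s') ->
    triangle_defect v w -> geodesic c n v p -> geodesic c n w q -> i <= n -> 0 < n ->
  minn (i + 2) (2 * n - i.+1) <= d (p i) (q 1).
Proof.
move=> IH Hc Gp Gq i_n n0; rewrite leqNgt; apply/negP => viol.
have [_ dPq1 [m [_ eqm evm dcm dPm]]] := triangle_defect_step IH Hc Gp Gq (addn0 i) i_n n0 viol.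
rewrite subn0 in dcm.
case: i i_n {IH viol} dPq1 dPm => [|i] i_n dPq1 dPm.
  by move: evm; rewrite -(geodesic0 Gp) (dist_eq0 dPm) irr_e.
have [m' emm' dm'P] := dist_succ (etrans (distC m (p i.+1)) dPm).
have dcm' : d c m' = n - 1.
  have := dist_triangle c (p i.+1) m'; have := dist_edge_le c emm'.
  by rewrite (geodesic_level Gp i_n) dcm (distC (p i.+1) m') dm'P; lia.
have nqm' : q 1 != m' by apply/eqP => E; move: dPq1; rewrite E distC dm'P; lia.
have emq : e m (q 1) by rewrite sym_e.
have eqm' := @clq_upto c n (leqnn n) m (q 1) m' dcm emq emm' (geodesic_level Gq n0) dcm' nqm'.
have := dist_triangle (p i.+1) m' (q 1).
by rewrite (distC (p i.+1) m') dm'P (distC m') (edge_dist1 eqm') dPq1; lia.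
Qed.

Lemma triangle_defect_shift s v w p q i l : (forall s', s' <= s -> triangle_defect_lb s') ->
    triangle_defect v w -> geodesic c n v p -> geodesic c n w q ->
    i + l = s -> i <= n -> l < n ->
  minn (s + 2) (2 * n - s.+1) <= d (p i) (q l.+1).
Proof.
move=> IH Hc Gp Gq Hs i_n l_n; case: l Hs l_n => [|l] Hs l_n.
  by move: IH; rewrite -Hs addn0 => IH; apply: triangle_defect_head IH Hc Gp Gq i_n l_n.
exact: triangle_defect_tail IH Hc Gp Gq Hs i_n l_n.
Qed.

Lemma triangle_defect_lb_all s : triangle_defect_lb s.
Proof.
elim/ltn_ind: s => s IH v w p q i l Hc Gp Gq Hs i_n l_n.
case: l Hs l_n => [|l] Hs l_n; last first.
  have IH' s' : s' <= i + l -> triangle_defect_lb s' by move=> le_s'; apply: IH; lia.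
  by apply: leq_trans (triangle_defect_shift IH' Hc Gp Gq erefl i_n l_n); lia.
case: i Hs i_n => [|i] Hs i_n.
  by case: Hc => _ _ evw _; rewrite -Hs (geodesic0 Gp) (geodesic0 Gq) (edge_dist1 evw) geq_minl.
have IH' s' : s' <= i -> triangle_defect_lb s' by move=> le_s'; apply: IH; lia.
rewrite distC; apply: leq_trans (triangle_defect_shift IH' (triangle_defectC Hc) Gq Gp (add0n i) (leq0n n) i_n).
by lia.
Qed.

Lemma triangle_defect_false v w : ~ triangle_defect v w.
Proof.
move=> Hc; case: (Hc) => dcv dcw evw nocom.
have n0 : 0 < n.
  by rewrite lt0n; apply/eqP => n0; move: evw; rewrite -(dist_eq0 (etrans dcv n0)) -(dist_eq0 (etrans dcw n0)) irr_e.
have n1 : 1 < n.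
  rewrite ltn_neqAle n0 andbT; apply/eqP => n1.
  have ecv : e v c by apply: dist1_edge; rewrite distC dcv n1.
  have ecw : e w c by apply: dist1_edge; rewrite distC dcw n1.
  by move: (nocom c ecv ecw); rewrite distxx -n1.
have [p Gp] := geodesic_exists dcv; have [q Gq] := geodesic_exists dcw.
apply: (geodesic_pair_cycle n1 (leqnn 1) Gp Gq) => i l i_n l_n.
apply/eqP; rewrite eqn_leq (triangle_defect_ub Hc Gp Gq i_n l_n) /= -subnDA.
exact: (triangle_defect_lb_all Hc Gp Gq erefl i_n l_n).
Qed.

End TriangleDefect.

Lemma lower_clique_triangle_condition L c : lower_clique c L /\ triangle_condition c L.
Proof.
elim/ltn_ind: L c => L IH c.
have clq c' : lower_clique c' L.
  move=> x y z dx exy exz dy dz nyz; case: L IH dx dy dz => [|k] IH dx dy dz.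
    by move: exy; rewrite -(dist_eq0 dx) -(dist_eq0 dy) irr_e.
  case: (boolP (e y z)) => // neyz.
  case: (@clique_defect_false c' x k dx (fun c'' L' le => IH L' le c'') y z).
  have eyx : e y x by rewrite sym_e.
  by split; rewrite ?dy ?dz ?subn1 ?(dist_eq2 eyx exz).
have clq_upto c' L' : L' <= L -> lower_clique c' L'.
  by rewrite leq_eqVlt => /orP [/eqP -> | lt]; [exact: clq | exact: (IH L' lt c').1].
split=> // v w dv dw evw.
case: (boolP [exists m, [&& e v m, e w m & d c m == L - 1]]) => [/existsP [m]|none].
  by case/and3P=> evm ewm /eqP dm; exists m.
case: (@triangle_defect_false c L (fun c' L' lt => (IH L' lt c').2) clq_upto v w).
split=> // m evm ewm; apply: contraNneq none => dm.
by apply/existsP; exists m; rewrite evm ewm dm eqxx.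
Qed.

Lemma bridged_TDC : TDC e.
Proof.
move=> u v w dvw _ duvw.
have [clq tc] := lower_clique_triangle_condition (d u v) u.
have [m [evm ewm dum]] := tc v w erefl (esym duvw) (dist1_edge (esym dvw)).
exists m; split=> // [x dxv dux nxm | y dyw duy nym]; rewrite sym_e.
  have evx : e v x by apply: dist1_edge; rewrite distC.
  exact: (clq v).
have ewy : e w y by apply: dist1_edge; rewrite distC.
rewrite -duvw in duy; exact: (clq w).
Qed.

Lemma bridged_QC : QC e.
Proof.
move=> u v w y dvy dwy dvw _ duvw duwy.
have [clq _] := lower_clique_triangle_condition (d u y) u.
have nvw : v != w by apply/eqP => E; move: dvw; rewrite E distxx.
have eyv : e y v by apply: dist1_edge; rewrite distC.
have eyw : e y w by apply: dist1_edge; rewrite distC.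
have evw : e v w by apply: (clq y); rewrite -?duwy -?duvw.
by move: dvw; rewrite (edge_dist1 evw).
Qed.

End BridgedGraph.

Unset Implicit Arguments.

Theorem lemma1 (T : finType) (e : rel T) :
  simple_connected_graph e -> bridged e ->
  TDC e /\ diamond_weakly_modular e.
Proof.
case=> sym_e irr_e conn_e bridged_e.
have tdc := bridged_TDC sym_e irr_e conn_e bridged_e.
have qc := bridged_QC sym_e irr_e conn_e bridged_e.
by split; last split.
Qed.
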